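(* Let $\Gamma\subset\mathbf{Z}^n$ be an almost periodic pattern, $\varepsilon>0$ and $\ell\in\mathbf{N}^*$. Set $\varepsilon'=\varepsilon/\ell$ and let $R_{\varepsilon'}>0$ and a relatively dense set $\mathcal N_{\varepsilon'}$ be such that $D_R^+((\Gamma+v)\Delta\Gamma)<\varepsilon'$ for all $R\ge R_{\varepsilon'}$ and all $v\in\mathcal N_{\varepsilon'}$. Then for every $k\in\{1,\dots,\ell\}$ and every $v_1,\dots,v_k\in\mathcal N_{\varepsilon'}$, $\forall R\ge R_{\varepsilon'},\quad D_R^+\Big(\big(\Gamma+\sum_{i=1}^k v_i\big)\Delta\Gamma\Big)<\varepsilon.$
   Context: Balls are for the sup norm: $B(x,R)=\{y:\max_i|x_i-y_i|<R\}$. Relatively dense: there is $R_0>0$ such that every ball of radius at least $R_0$ meets the set; uniformly discrete: there is $r>0$ such that every ball of radius at most $r$ contains at most one point; Delone: both. $D_R^+(\Gamma)=\sup_{x\in\mathbf{R}^n}\frac{\operatorname{Card}(B(x,R)\cap\Gamma)}{\operatorname{Card}(B(x,R)\cap\mathbf{Z}^n)}$. A Delone set $\Gamma\subset\mathbf{Z}^n$ is an almost periodic pattern if for every $\varepsilon>0$ there exist $R_\varepsilon>0$ and a relatively dense set $\mathcal N_\varepsilon$ with $D_R^+((\Gamma+v)\Delta\Gamma)<\varepsilon$ for all $R\ge R_\varepsilon$, $v\in\mathcal N_\varepsilon$. *)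

From HB Require Import structures.
From mathcomp Require Import all_boot all_order all_algebra.
From mathcomp Require Import finmap all_classical all_reals.
Set Implicit Arguments. Unset Strict Implicit. Unset Printing Implicit Defensive.
Import Order.TTheory GRing.Theory Num.Theory.
Local Open Scope classical_set_scope.
Local Open Scope ring_scope.

Definition inball (R : realType) (n : nat) (x : 'rV[R]_n) (r : R)
  : set 'rV[int]_n :=
  [set y | forall i : 'I_n, `|x ord0 i - (y ord0 i)%:~R| < r].

Definition cnt (R : realType) (n : nat) (A : set 'rV[int]_n) : R :=
  (#|` fset_set A|)%fset%:R.

Definition Dplus (R : realType) (n : nat) (r : R) (G : set 'rV[int]_n) : R :=
  sup [set cnt R (inball x r `&` G) / cnt R (inball x r) | x in [set: 'rV[R]_n]].

Definition translate (n : nat) (G : set 'rV[int]_n) (v : 'rV[int]_n)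
  : set 'rV[int]_n := [set y + v | y in G].

Definition symdiff (T : Type) (A B : set T) : set T := (A `\` B) `|` (B `\` A).

Definition rel_dense (R : realType) (n : nat) (S : set 'rV[int]_n) : Prop :=
  exists R0 : R, 0 < R0 /\
    forall (x : 'rV[R]_n) (r : R), R0 <= r -> exists y, S y /\ inball x r y.

Definition unif_discrete (R : realType) (n : nat) (S : set 'rV[int]_n) : Prop :=
  exists r0 : R, 0 < r0 /\
    forall (x : 'rV[R]_n) (r : R), r <= r0 ->
      forall y z, S y -> S z -> inball x r y -> inball x r z -> y = z.

Definition delone (R : realType) (n : nat) (S : set 'rV[int]_n) : Prop :=
  rel_dense R S /\ unif_discrete R S.

Definition almost_periodic (R : realType) (n : nat) (G : set 'rV[int]_n) : Prop :=
  delone R G /\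
  forall eps : R, 0 < eps ->
    exists (Re : R) (N : set 'rV[int]_n), 0 < Re /\ rel_dense R N /\
      forall r : R, Re <= r -> forall v, N v ->
        Dplus r (symdiff (translate G v) G) < eps.

From HB Require Import structures.
From mathcomp Require Import all_boot all_order all_algebra.
From mathcomp Require Import finmap all_classical all_reals.
Import Order.TTheory GRing.Theory Num.Theory.
Local Open Scope classical_set_scope.
Local Open Scope ring_scope.
Set Implicit Arguments. Unset Strict Implicit.

(* The upper density D_r^+ is monotone, subadditive and does not increase under
   translation.  Since (G + a + b) Δ G is contained in ((G + a) Δ G) + b together
   with (G + b) Δ G, the density of (G + v_1 + ... + v_k) Δ G is less than
   k ε/l <= ε by induction on k. *)

Lemma fset_set_infinite (T : choiceType) (A : set T) :
  ~ finite_set A -> fset_set A = fset0.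
Proof. by move=> infA; rewrite /fset_set; case: pselect. Qed.

Section UpperDensity.
Variables (R : realType) (n : nat).
Implicit Types (A B : set 'rV[int]_n) (r c : R) (x : 'rV[R]_n) (a : 'rV[int]_n).

Lemma cnt_infinite A : ~ finite_set A -> cnt R A = 0.
Proof. by move=> infA; rewrite /cnt fset_set_infinite. Qed.

Lemma cnt_ge0 A : 0 <= cnt R A.
Proof. exact: ler0n. Qed.

Lemma le_cnt A B : A `<=` B -> finite_set B -> cnt R A <= cnt R B.
Proof.
move=> AB finB; have finA := sub_finite_set AB finB.
by rewrite /cnt ler_nat; apply: fsubset_leq_card; rewrite -fset_set_sub.
Qed.

Lemma cnt_setU_le A B :
  finite_set (A `|` B) -> cnt R (A `|` B) <= cnt R A + cnt R B.
Proof.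
rewrite finite_setU => -[finA finB].
by rewrite /cnt fset_setU // -natrD ler_nat cardfsU leq_subr.
Qed.

Lemma cnt_image_can (f g : 'rV[int]_n -> 'rV[int]_n) A :
  cancel f g -> cnt R (f @` A) = cnt R A.
Proof.
move=> fK; have [finA|infA] := pselect (finite_set A).
  by rewrite /cnt fset_set_image // card_imfset //; apply: can_inj fK.
rewrite !cnt_infinite // => finfA; apply: infA.
have <- : g @` (f @` A) = A.
  by rewrite image_comp (_ : g \o f = id) ?image_id //; apply: funext => y /=.
exact: finite_image.
Qed.

Definition density x r A := cnt R (inball x r `&` A) / cnt R (inball x r).

Lemma density_ge0 x r A : 0 <= density x r A.
Proof. by rewrite divr_ge0 ?cnt_ge0. Qed.

(* On an infinite ball the density is the junk value 0, as [cnt] is then 0. *)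
Lemma density_infinite x r A : ~ finite_set (inball x r) -> density x r A = 0.
Proof. by move=> infB; rewrite /density (cnt_infinite infB) invr0 mulr0. Qed.

Lemma density_le1 x r A : density x r A <= 1.
Proof.
have [finB|/density_infinite->] := pselect (finite_set (inball x r)); last first.
  exact: ler01.
have [B0|B_gt0] := eqVneq (cnt R (inball x r)) 0.
  by rewrite /density B0 invr0 mulr0.
rewrite ler_pdivrMr ?mul1r ?lt0r ?B_gt0 ?cnt_ge0 //.
by apply: le_cnt finB => y [].
Qed.

Lemma le_density x r A B : A `<=` B -> density x r A <= density x r B.
Proof.
move=> AB; have [finB|infB] := pselect (finite_set (inball x r)); last first.
  by rewrite !density_infinite.
rewrite ler_wpM2r ?invr_ge0 ?cnt_ge0 // le_cnt //; last first.
  by apply: sub_finite_set finB => y [].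
by move=> y [By Ay]; split => //; apply: AB.
Qed.

Lemma density_setU_le x r A B :
  density x r (A `|` B) <= density x r A + density x r B.
Proof.
have [finB|infB] := pselect (finite_set (inball x r)); last first.
  by rewrite !density_infinite ?addr0.
rewrite -mulrDl ler_wpM2r ?invr_ge0 ?cnt_ge0 // setIUr cnt_setU_le //.
by apply: sub_finite_set finB => y [] [].
Qed.

Definition realv a : 'rV[R]_n := map_mx intr a.

Lemma translateE A a y : translate A a y <-> A (y - a).
Proof.
split; first by move=> [z Az <-]; rewrite addrK.
by move=> Aya; exists (y - a); rewrite ?subrK.
Qed.

Lemma inball_translate x r A a :
  inball x r `&` translate A a = +%R^~ a @` (inball (x - realv a) r `&` A).
Proof.
apply/seteqP; split.
  move=> y [By /translateE Aya]; exists (y - a); last by rewrite subrK.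
  by split=> // i; move: (By i); rewrite !mxE intrB opprB addrA subrK.
move=> _ [y [By Ay] <-]; split; last by apply/translateE; rewrite addrK.
by move=> i; move: (By i); rewrite !mxE intrD opprD addrA addrAC.
Qed.

Lemma density_translate x r A a :
  density x r (translate A a) = density (x - realv a) r A.
Proof.
have addK : cancel (+%R^~ a) (+%R^~ (- a)) by move=> y; rewrite addrK.
have translateT : translate setT a = setT.
  by apply/seteqP; split=> // y _; apply/translateE.
rewrite /density inball_translate (cnt_image_can _ addK).
by rewrite -[inball x r]setIT -translateT inball_translate (cnt_image_can _ addK) setIT.
Qed.

Lemma DplusE r A : Dplus r A = sup [set density x r A | x in [set: 'rV[R]_n]].
Proof. by []. Qed.

Lemma density_le_Dplus x r A : density x r A <= Dplus r A.
Proof.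
rewrite DplusE; apply: sup_upper_bound; last by exists x.
split; first by exists (density 0 r A), 0.
by exists 1 => _ [y _ <-]; apply: density_le1.
Qed.

Lemma Dplus_le r c A : (forall x, density x r A <= c) -> Dplus r A <= c.
Proof.
move=> ub; rewrite DplusE; apply: ge_sup; first by exists (density 0 r A), 0.
by move=> _ [x _ <-].
Qed.

Lemma le_Dplus r A B : A `<=` B -> Dplus r A <= Dplus r B.
Proof.
move=> AB; apply: Dplus_le => x.
exact: le_trans (le_density x r AB) (density_le_Dplus x r B).
Qed.

Lemma Dplus_setU_le r A B : Dplus r (A `|` B) <= Dplus r A + Dplus r B.
Proof.
apply: Dplus_le => x; apply: le_trans (density_setU_le x r A B) _.
by rewrite lerD ?density_le_Dplus.
Qed.

Lemma Dplus_translate_le r A a : Dplus r (translate A a) <= Dplus r A.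
Proof. by apply: Dplus_le => x; rewrite density_translate density_le_Dplus. Qed.

Lemma symdiff_translateD (G : set 'rV[int]_n) a b :
  symdiff (translate G (a + b)) G `<=`
  translate (symdiff (translate G a) G) b `|` symdiff (translate G b) G.
Proof.
move=> y; have Gab : translate G (a + b) y <-> translate G a (y - b).
  by rewrite !translateE opprD addrA addrAC.
have [Gb|nGb] := pselect (translate G b y) => -[] [Gy nGy].
- by right; left.
- left; apply/translateE; right; split; first exact/translateE.
  by move/Gab.
- left; apply/translateE; left; split; first exact/Gab.
  by move/translateE.
- by right; right.
Qed.

Lemma Dplus_symdiff_translate_sum_lt (G N : set 'rV[int]_n) r c :
  (forall v, N v -> Dplus r (symdiff (translate G v) G) < c) ->
  forall m (v : 'I_m.+1 -> 'rV[int]_n), (forall i, N (v i)) ->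
  Dplus r (symdiff (translate G (\sum_(i < m.+1) v i)) G) < m.+1%:R * c.
Proof.
move=> Nlt; elim=> [|m IHm] v Nv; first by rewrite big_ord1 mul1r Nlt.
rewrite big_ord_recr /= [m.+2%:R]mulrSr mulrDl mul1r.
apply: le_lt_trans (le_Dplus _ (@symdiff_translateD G _ _)) _.
apply: le_lt_trans (Dplus_setU_le _ _ _) _.
apply: le_lt_trans (lerD (Dplus_translate_le _ _ _) (lexx _)) _.
by apply: ltrD; [apply: IHm | apply: Nlt].
Qed.

End UpperDensity.

Theorem lemmaA1 (R : realType) (n : nat) (G : set 'rV[int]_n) :
  almost_periodic R G ->
  forall (eps : R) (l : nat), 0 < eps -> (0 < l)%N ->
  forall (Re : R) (N : set 'rV[int]_n),
    0 < Re -> rel_dense R N ->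
    (forall r : R, Re <= r -> forall v, N v ->
        Dplus r (symdiff (translate G v) G) < eps / l%:R) ->
  forall (k : nat), (1 <= k <= l)%N ->
  forall v : 'I_k -> 'rV[int]_n, (forall i, N (v i)) ->
  forall r : R, Re <= r ->
    Dplus r (symdiff (translate G (\sum_(i < k) v i)) G) < eps.
Proof.
move=> _ eps l eps_gt0 l_gt0 Re N _ _ NRe [//|m] /andP[_ le_kl] v Nv r le_Re_r.
apply: lt_le_trans (Dplus_symdiff_translate_sum_lt (NRe r le_Re_r) Nv) _.
rewrite mulrA ler_pdivrMr ?ltr0n // mulrC.
by apply: ler_wpM2l; [exact: ltW | rewrite ler_nat].
Qed.
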